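(* Let $z$ lie in the upper half-plane and let $E_4,\Delta_{24}$ and $\rho_n$ be as in the context. Then for every positive integer $n$, $$\rho_n(z)=\sum_{i=0}^{\lfloor n/3\rfloor}\frac{2n+3}{2i+1}\binom{n-i}{2i}2^{8i}\Delta_{24}(z)^iE_4(z)^{n-3i}.$$
   Context: For $z$ with $\mathrm{Im}(z)>0$ put $q=e^{\pi\sqrt{-1}z}$ and define $\vartheta_2(z)=\sum_{m\in\mathbb{Z}}q^{(m+1/2)^2}$, $\vartheta_3(z)=\sum_{m\in\mathbb{Z}}q^{m^2}$, $\vartheta_4(z)=\sum_{m\in\mathbb{Z}}(-q)^{m^2}$. Define $E_4(z)=\frac12(\vartheta_2(z)^8+\vartheta_3(z)^8+\vartheta_4(z)^8)$, $\Delta_{24}(z)=\left(\frac{\vartheta_2(z)\vartheta_3(z)\vartheta_4(z)}{2}\right)^8$, and for a nonnegative integer $n$, $$\rho_n(z)=\frac{\vartheta_3(z)^{8(n+1)+4}-\vartheta_2(z)^{8(n+1)+4}-\vartheta_4(z)^{8(n+1)+4}}{(\vartheta_2(z)\vartheta_3(z)\vartheta_4(z))^4}.$$ *)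

From Stdlib Require Import Reals.
From Coquelicot Require Import Coquelicot.

Open Scope C_scope.

Definition Cexp (w : C) : C :=
  (exp (Re w) * cos (Im w), exp (Re w) * sin (Im w))%R.

Definition CSeries (u : nat -> C) : C :=
  (Series (fun k => Re (u k)), Series (fun k => Im (u k))).

(** Sum over all integers: a_0 + sum_{k>=1} (a_k + a_{-k})
    (the series in question are absolutely convergent). *)
Definition Zsum (a : Z -> C) : C :=
  a 0%Z + CSeries (fun k => a (Z.of_nat (S k)) + a (- Z.of_nat (S k))%Z).

(** q^r := exp(pi i z r) with q = exp(pi i z). *)
Definition qpow (z : C) (r : R) : C := Cexp (RtoC PI * Ci * z * RtoC r).

Definition theta2 (z : C) : C :=
  Zsum (fun m => qpow z ((IZR m + /2) ^ 2)%R).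
Definition theta3 (z : C) : C :=
  Zsum (fun m => qpow z (IZR m ^ 2)%R).
(** (-q)^(m^2) = (-1)^(m^2) q^(m^2) (integer exponent). *)
Definition theta4 (z : C) : C :=
  Zsum (fun m => RtoC ((-1) ^ Z.to_nat (m * m)) * qpow z (IZR m ^ 2)%R).

Definition E4 (z : C) : C :=
  / 2 * (Cpow (theta2 z) 8 + Cpow (theta3 z) 8 + Cpow (theta4 z) 8).

Definition Delta24 (z : C) : C :=
  Cpow (theta2 z * theta3 z * theta4 z / 2) 8.

Definition rho (n : nat) (z : C) : C :=
  (Cpow (theta3 z) (8 * (n + 1) + 4) - Cpow (theta2 z) (8 * (n + 1) + 4)
     - Cpow (theta4 z) (8 * (n + 1) + 4))
  / Cpow (theta2 z * theta3 z * theta4 z) 4.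

Definition binomR (n k : nat) : R := Binomial.C n k.

(* Put a = theta2^4 and b = theta4^4.  Multiplying theta series and splitting
   the product by parity of the index difference gives the duplication formulas
     theta3(z)^2 = theta3(2z)^2 + theta2(2z)^2,  theta4(z)^2 = theta3(2z)^2 - theta2(2z)^2,
     theta2(z)^2 = 2 theta2(2z) theta3(2z),
   hence Jacobi's identity theta3^4 = a + b.  They also show that theta2 theta3 theta4
   vanishes at z only if it vanishes at 2z, and it does not vanish once |q| is small.
   Then E4 = a^2 + ab + b^2, 2^8 Delta24 = (ab(a+b))^2, and rho_n = (c^(2n+3) - a^(2n+3)
   - b^(2n+3)) / (abc) with c = a + b.  As a^2, b^2, c^2 are the roots of
   t (t - E4)^2 - 2^8 Delta24, this quotient satisfies the associated three-term
   recurrence; so does the binomial sum, whose coefficients obey Pascal-type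
   recurrences, and the first three values agree.
   All manipulations of bilateral series go through symmetric partial sums, which
   converge geometrically. *)

From Stdlib Require Import Reals Lra Lia ZArith FunctionalExtensionality.
From Coquelicot Require Import Coquelicot.
Open Scope C_scope.

(** * Geometric convergence *)

Lemma pow_le_decr (r : R) (a b : nat) :
  (0 <= r <= 1)%R -> (a <= b)%nat -> (r ^ b <= r ^ a)%R.
Proof.
  intros Hr Hab; induction Hab as [|b _ IH]; [lra|].
  simpl; pose proof (pow_le r b (proj1 Hr)); nra.
Qed.

Lemma Rle_0_of_le_geom (d M r : R) :
  (0 <= r < 1)%R -> (forall N, d <= M * r ^ N)%R -> (d <= 0)%R.
Proof.
  intros Hr Hd; apply Rnot_lt_le; intros Hpos.
  assert (HM : (0 < M)%R) by (specialize (Hd O); simpl in Hd; lra).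
  destruct (pow_lt_1_zero r ltac:(rewrite Rabs_pos_eq; lra) (d / M))
    as [N HN]; [apply Rdiv_lt_0_compat; lra|].
  specialize (HN N (le_n N)); rewrite Rabs_pos_eq in HN by (apply pow_le; lra).
  specialize (Hd N); apply (Rmult_lt_compat_l M) in HN; [|lra].
  replace (M * (d / M))%R with d in HN by (field; lra); lra.
Qed.

Definition cvg_geom (s : nat -> C) (x : C) : Prop :=
  exists M r, (0 <= r < 1)%R /\ forall N, (Cmod (s N - x) <= M * r ^ N)%R.

Lemma geom_bound_add (M1 r1 M2 r2 : R) :
  (0 <= r1 < 1)%R -> (0 <= r2 < 1)%R ->
  exists M r, (0 <= r < 1)%R /\ forall N, (M1 * r1 ^ N + M2 * r2 ^ N <= M * r ^ N)%R.
Proof.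
  intros Hr1 Hr2; exists (Rabs M1 + Rabs M2)%R, (Rmax r1 r2); split.
  - unfold Rmax; destruct Rle_dec; lra.
  - intros N.
    pose proof (pow_incr r1 (Rmax r1 r2) N (conj (proj1 Hr1) (Rmax_l r1 r2))).
    pose proof (pow_incr r2 (Rmax r1 r2) N (conj (proj1 Hr2) (Rmax_r r1 r2))).
    pose proof (pow_le r1 N (proj1 Hr1)); pose proof (pow_le r2 N (proj1 Hr2)).
    pose proof (Rle_abs M1); pose proof (Rle_abs M2).
    pose proof (Rabs_pos M1); pose proof (Rabs_pos M2); nra.
Qed.

Lemma cvg_geom_unique s x y : cvg_geom s x -> cvg_geom s y -> x = y.
Proof.
  intros (M1 & r1 & Hr1 & H1) (M2 & r2 & Hr2 & H2).
  destruct (geom_bound_add M1 r1 M2 r2 Hr1 Hr2) as (M & r & Hr & HM).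
  assert (Hd : (Cmod (x - y) <= 0)%R).
  { apply (Rle_0_of_le_geom _ M r Hr); intros N.
    replace (x - y) with ((s N - y) - (s N - x)) by ring.
    eapply Rle_trans; [apply Cmod_triangle|]; rewrite Cmod_opp.
    specialize (H1 N); specialize (H2 N); specialize (HM N); lra. }
  apply Ceq_minus, Cmod_eq_0; pose proof (Cmod_ge_0 (x - y)); lra.
Qed.

Lemma cvg_geom_plus s t x y :
  cvg_geom s x -> cvg_geom t y -> cvg_geom (fun N => s N + t N) (x + y).
Proof.
  intros (M1 & r1 & Hr1 & H1) (M2 & r2 & Hr2 & H2).
  destruct (geom_bound_add M1 r1 M2 r2 Hr1 Hr2) as (M & r & Hr & HM).
  exists M, r; split; [exact Hr|]; intros N.
  replace (s N + t N - (x + y)) with ((s N - x) + (t N - y)) by ring.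
  eapply Rle_trans; [apply Cmod_triangle|].
  specialize (H1 N); specialize (H2 N); specialize (HM N); lra.
Qed.

Lemma cvg_geom_scal c s x : cvg_geom s x -> cvg_geom (fun N => c * s N) (c * x).
Proof.
  intros (M & r & Hr & H); exists (Cmod c * M)%R, r; split; [exact Hr|]; intros N.
  replace (c * s N - c * x) with (c * (s N - x)) by ring.
  rewrite Cmod_mult, Rmult_assoc; apply Rmult_le_compat_l; [apply Cmod_ge_0|apply H].
Qed.

Lemma cvg_geom_ext s t x : (forall N, s N = t N) -> cvg_geom t x -> cvg_geom s x.
Proof. intros Hst; replace s with t; [easy|]; apply functional_extensionality; auto. Qed.

Lemma cvg_geom_subseq s (g : nat -> nat) x :
  (forall N, (N <= g N)%nat) -> cvg_geom s x -> cvg_geom (fun N => s (g N)) x.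
Proof.
  intros Hg (M & r & Hr & H); exists (Rabs M), r; split; [exact Hr|]; intros N.
  eapply Rle_trans; [apply H|].
  pose proof (pow_le_decr r N (g N) ltac:(lra) (Hg N)).
  pose proof (pow_le r (g N) (proj1 Hr)); pose proof (Rle_abs M); pose proof (Rabs_pos M); nra.
Qed.

Lemma cvg_geom_0 s M r :
  (0 <= r < 1)%R -> (forall N, Cmod (s N) <= M * r ^ N)%R -> cvg_geom s 0.
Proof.
  intros Hr H; exists M, r; split; [exact Hr|]; intros N.
  replace (s N - 0) with (s N) by ring; apply H.
Qed.

Lemma Series_geom_bound (u : nat -> R) (B r : R) :
  (0 <= r < 1)%R -> (forall k, Rabs (u k) <= B * r ^ k)%R ->
  ex_series u /\ (Rabs (Series u) <= B / (1 - r))%R.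
Proof.
  intros Hr Hu.
  assert (Hgeom : ex_series (fun k => B * r ^ k)%R).
  { apply (ex_series_scal_l B (fun k => r ^ k)%R), ex_series_geom.
    rewrite Rabs_pos_eq; lra. }
  assert (Habs : ex_series (fun k => Rabs (u k))).
  { refine (@ex_series_le R_AbsRing R_CompleteNormedModule _ _ (fun k => _) Hgeom).
    change (Rabs (Rabs (u k)) <= B * r ^ k)%R; rewrite Rabs_Rabsolu; apply Hu. }
  split.
  - apply (@ex_series_le R_AbsRing R_CompleteNormedModule _ _ Hu Hgeom).
  - eapply Rle_trans; [apply Series_Rabs, Habs|].
    eapply Rle_trans; [apply Series_le; [intros k; split; [apply Rabs_pos|apply Hu]|exact Hgeom]|].
    rewrite Series_scal_l, Series_geom by (rewrite Rabs_pos_eq; lra); unfold Rdiv; lra.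
Qed.

Lemma Im_le_Cmod (w : C) : (Rabs (Im w) <= Cmod w)%R.
Proof.
  destruct w as [x y]; unfold Cmod, Im; simpl.
  rewrite <- sqrt_Rsqr_abs; apply sqrt_le_1_alt; unfold Rsqr; nra.
Qed.

Lemma Cmod_le_Re_Im (w : C) : (Cmod w <= Rabs (Re w) + Rabs (Im w))%R.
Proof.
  destruct w as [x y]; unfold Cmod, Re, Im; simpl.
  pose proof (Rabs_pos x); pose proof (Rabs_pos y).
  rewrite <- (sqrt_Rsqr (Rabs x + Rabs y)) by lra.
  apply sqrt_le_1_alt; pose proof (Rsqr_abs x); pose proof (Rsqr_abs y); unfold Rsqr in *; nra.
Qed.

(** * Geometrically dominated bilateral series *)

Definition Zpair (f : Z -> C) (k : nat) : C :=
  f (Z.of_nat (S k)) + f (- Z.of_nat (S k))%Z.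

Fixpoint Zpart (f : Z -> C) (N : nat) : C :=
  match N with O => f 0%Z | S N' => Zpart f N' + Zpair f N' end.

Definition Zgeom (K r : R) (f : Z -> C) : Prop :=
  (0 < r < 1)%R /\ forall m, (Cmod (f m) <= K * r ^ Z.abs_nat m)%R.

Lemma Zsum_ext (f g : Z -> C) : (forall m, f m = g m) -> Zsum f = Zsum g.
Proof. intros H; f_equal; apply functional_extensionality, H. Qed.

Section Zgeom.
Variables (K r : R) (f : Z -> C).
Hypothesis Hf : Zgeom K r f.

Lemma Zgeom_nonneg : (0 <= K)%R.
Proof.
  destruct Hf as [_ H]; specialize (H 0%Z); simpl in H; pose proof (Cmod_ge_0 (f 0%Z)); lra.
Qed.

Lemma Zpair_bound k : (Cmod (Zpair f k) <= 2 * K * r * r ^ k)%R.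
Proof.
  destruct Hf as [_ H]; unfold Zpair; eapply Rle_trans; [apply Cmod_triangle|].
  pose proof (H (Z.of_nat (S k))); pose proof (H (- Z.of_nat (S k))%Z).
  replace (Z.abs_nat (Z.of_nat (S k))) with (S k) in * by lia.
  replace (Z.abs_nat (- Z.of_nat (S k))) with (S k) in * by lia.
  simpl in *; lra.
Qed.

Lemma Zsum_sub_Zpart N : Zsum f - Zpart f N = CSeries (fun k => Zpair f (N + k)).
Proof.
  assert (Hex : forall (p : C -> R) N, (forall w, Rabs (p w) <= Cmod w)%R ->
            ex_series (fun k => p (Zpair f (N + k)))).
  { intros p M Hp; apply (Series_geom_bound _ (2 * K * r * r ^ M) r ltac:(destruct Hf; lra)).
    intros k; eapply Rle_trans; [apply Hp|]; eapply Rle_trans; [apply Zpair_bound|].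
    rewrite pow_add; lra. }
  induction N as [|N IH].
  - unfold Zsum; change (f 0%Z + CSeries (Zpair f) - f 0%Z = CSeries (Zpair f)); ring.
  - simpl Zpart; replace (Zsum f - (Zpart f N + Zpair f N)) with (Zsum f - Zpart f N - Zpair f N)
      by ring; rewrite IH; unfold CSeries.
    rewrite (Series_incr_1 (fun k => Re (Zpair f (N + k)))),
      (Series_incr_1 (fun k => Im (Zpair f (N + k))))
      by (apply Hex; intros; (apply re_le_Cmod || apply Im_le_Cmod)).
    rewrite Nat.add_0_r; apply injective_projections; simpl; ring_simplify; apply Series_ext;
      intros k; rewrite Nat.add_succ_r; reflexivity.
Qed.

Lemma Zsum_tail N : (Cmod (Zsum f - Zpart f N) <= 4 * K / (1 - r) * r ^ S N)%R.
Proof.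
  destruct Hf as [Hr _]; rewrite Zsum_sub_Zpart.
  assert (Hb : forall (p : C -> R), (forall w, Rabs (p w) <= Cmod w)%R ->
            (Rabs (Series (fun k => p (Zpair f (N + k)))) <= 2 * K * r ^ S N / (1 - r))%R).
  { intros p Hp; apply Series_geom_bound; [lra|]; intros k.
    eapply Rle_trans; [apply Hp|]; eapply Rle_trans; [apply Zpair_bound|].
    rewrite pow_add; simpl; lra. }
  eapply Rle_trans; [apply Cmod_le_Re_Im|].
  change (Rabs (Series (fun k => Re (Zpair f (N + k))))
          + Rabs (Series (fun k => Im (Zpair f (N + k)))) <= 4 * K / (1 - r) * r ^ S N)%R.
  pose proof (Hb Re re_le_Cmod); pose proof (Hb Im Im_le_Cmod).
  replace (4 * K / (1 - r) * r ^ S N)%R with (2 * (2 * K * r ^ S N / (1 - r)))%R by (field; lra).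
  lra.
Qed.

Lemma Zsum_cvg_geom : cvg_geom (Zpart f) (Zsum f).
Proof.
  exists (4 * K / (1 - r) * r)%R, r; split; [destruct Hf; lra|]; intros N.
  rewrite <- Cmod_opp, Copp_minus_distr, Rmult_assoc, tech_pow_Rmult; apply Zsum_tail.
Qed.

Lemma Zsum_bound : (Cmod (Zsum f) <= K * (1 + 4 / (1 - r)))%R.
Proof.
  pose proof (Zsum_tail 0) as T; pose proof Zgeom_nonneg as HK; destruct Hf as [Hr H].
  specialize (H 0%Z); simpl in T, H.
  replace (Zsum f) with ((Zsum f - f 0%Z) + f 0%Z) by ring.
  eapply Rle_trans; [apply Cmod_triangle|].
  assert (4 * K / (1 - r) * (r * 1) <= 4 * K / (1 - r))%R.
  { assert (0 <= 4 * K / (1 - r))%R by (apply Rdiv_le_0_compat; lra); nra. }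
  unfold Rdiv in *; lra.
Qed.

Lemma Zpart_bound N : (Cmod (Zpart f N) <= K * (1 + 8 / (1 - r)))%R.
Proof.
  pose proof (Zsum_tail N) as T; pose proof Zsum_bound as B; pose proof Zgeom_nonneg as HK.
  destruct Hf as [Hr _].
  replace (Zpart f N) with (Zsum f - (Zsum f - Zpart f N)) by ring.
  eapply Rle_trans; [apply Cmod_triangle|]; rewrite Cmod_opp.
  assert (4 * K / (1 - r) * r ^ S N <= 4 * K / (1 - r))%R.
  { assert (0 <= 4 * K / (1 - r))%R by (apply Rdiv_le_0_compat; lra).
    pose proof (pow_le_decr r 0 (S N) ltac:(lra) ltac:(lia)); simpl in *; nra. }
  unfold Rdiv in *; lra.
Qed.
End Zgeom.

Lemma Zpart_plus f g N : Zpart (fun m => f m + g m) N = Zpart f N + Zpart g N.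
Proof. induction N as [|N IH]; [reflexivity|]; simpl; rewrite IH; unfold Zpair; ring. Qed.

Lemma Zpart_scal c f N : Zpart (fun m => c * f m) N = c * Zpart f N.
Proof. induction N as [|N IH]; [reflexivity|]; simpl; rewrite IH; unfold Zpair; ring. Qed.

Lemma Zpart_swap (F : Z -> Z -> C) N1 N2 :
  Zpart (fun m => Zpart (F m) N2) N1 = Zpart (fun n => Zpart (fun m => F m n) N1) N2.
Proof.
  induction N1 as [|N1 IH]; [reflexivity|].
  simpl; rewrite IH; unfold Zpair; rewrite <- !Zpart_plus; reflexivity.
Qed.

Lemma Zpart_shift1 f N :
  Zpart (fun m => f (m + 1)%Z) N = Zpart f N + (f (Z.of_nat (S N)) - f (- Z.of_nat N)%Z).
Proof.
  induction N as [|N IH]; [simpl; ring|].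
  simpl Zpart; rewrite IH; unfold Zpair.
  replace (Z.of_nat (S N) + 1)%Z with (Z.of_nat (S (S N))) by lia.
  replace (- Z.of_nat (S N) + 1)%Z with (- Z.of_nat N)%Z by lia.
  ring.
Qed.

Lemma Zpart_double f N :
  Zpart f (2 * N) = Zpart (fun j => f (2 * j)%Z) N + Zpart (fun j => f (2 * j + 1)%Z) N
                    - f (2 * Z.of_nat N + 1)%Z.
Proof.
  induction N as [|N IH]; [simpl; ring|].
  replace (2 * S N)%nat with (S (S (2 * N))) by lia.
  cbn [Zpart]; rewrite IH; unfold Zpair.
  replace (Z.of_nat (S (2 * N))) with (2 * Z.of_nat N + 1)%Z by lia.
  replace (Z.of_nat (S (S (2 * N)))) with (2 * Z.of_nat N + 2)%Z by lia.
  replace (- (2 * Z.of_nat N + 1))%Z with (2 * - Z.of_nat (S N) + 1)%Z by lia.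
  replace (- (2 * Z.of_nat N + 2))%Z with (2 * - Z.of_nat (S N))%Z by lia.
  replace (2 * Z.of_nat (S N) + 1)%Z with (2 * Z.of_nat N + 3)%Z by lia.
  replace (2 * Z.of_nat (S N))%Z with (2 * Z.of_nat N + 2)%Z by lia.
  ring.
Qed.

Lemma Zgeom_scal c K r f : Zgeom K r f -> Zgeom (Cmod c * K) r (fun m => c * f m).
Proof.
  intros [Hr H]; split; [exact Hr|]; intros m.
  rewrite Cmod_mult, Rmult_assoc; apply Rmult_le_compat_l; [apply Cmod_ge_0|apply H].
Qed.

Lemma Zgeom_reindex K r f (g : Z -> Z) :
  (forall j, (Z.abs_nat j <= Z.abs_nat (g j))%nat) -> Zgeom K r f -> Zgeom K r (fun j => f (g j)).
Proof.
  intros Hg Hf; pose proof (Zgeom_nonneg _ _ _ Hf) as HK; destruct Hf as [Hr H].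
  split; [exact Hr|]; intros j; eapply Rle_trans; [apply H|].
  apply Rmult_le_compat_l; [exact HK|]; apply pow_le_decr; [lra|apply Hg].
Qed.

Lemma Zgeom_shift K r f k : Zgeom K r f -> Zgeom (K / r ^ Z.abs_nat k) r (fun m => f (m + k)%Z).
Proof.
  intros Hf; pose proof (Zgeom_nonneg _ _ _ Hf) as HK; destruct Hf as [Hr H].
  assert (Hp : (0 < r ^ Z.abs_nat k)%R) by (apply pow_lt; lra).
  split; [exact Hr|]; intros m; eapply Rle_trans; [apply H|].
  unfold Rdiv; rewrite Rmult_assoc; apply Rmult_le_compat_l; [exact HK|].
  apply Rmult_le_reg_r with (r ^ Z.abs_nat k)%R; [exact Hp|].
  replace (/ r ^ Z.abs_nat k * r ^ Z.abs_nat m * r ^ Z.abs_nat k)%R with (r ^ Z.abs_nat m)%R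
    by (field; lra).
  rewrite <- pow_add; apply pow_le_decr; [lra|lia].
Qed.

Lemma Zsum_scal_l c K r f : Zgeom K r f -> Zsum (fun m => c * f m) = c * Zsum f.
Proof.
  intros Hf; apply (cvg_geom_unique (fun N => c * Zpart f N)).
  - apply (cvg_geom_ext _ (Zpart (fun m => c * f m))); [intros; symmetry; apply Zpart_scal|].
    apply (Zsum_cvg_geom _ _ _ (Zgeom_scal c _ _ _ Hf)).
  - apply cvg_geom_scal, (Zsum_cvg_geom _ _ _ Hf).
Qed.

Lemma Zsum_scal_r c K r f : Zgeom K r f -> Zsum (fun m => f m * c) = Zsum f * c.
Proof.
  intros Hf; rewrite Cmult_comm, <- (Zsum_scal_l c K r f Hf); apply Zsum_ext; intros; ring.
Qed.

Lemma Zsum_shift1 K r f : Zgeom K r f -> Zsum (fun m => f (m + 1)%Z) = Zsum f.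
Proof.
  intros Hf; pose proof (Zgeom_nonneg _ _ _ Hf) as HK.
  apply (cvg_geom_unique (Zpart (fun m => f (m + 1)%Z))).
  - apply (Zsum_cvg_geom _ _ _ (Zgeom_shift _ _ _ 1 Hf)).
  - replace (Zsum f) with (Zsum f + 0) by ring.
    apply (cvg_geom_ext _ (fun N => Zpart f N + (f (Z.of_nat (S N)) - f (- Z.of_nat N)%Z)));
      [intros; apply Zpart_shift1|].
    apply cvg_geom_plus; [apply (Zsum_cvg_geom _ _ _ Hf)|].
    destruct Hf as [Hr H]; apply (cvg_geom_0 _ (2 * K) r); [lra|]; intros N.
    eapply Rle_trans; [apply Cmod_triangle|]; rewrite Cmod_opp.
    pose proof (H (Z.of_nat (S N))); pose proof (H (- Z.of_nat N)%Z).
    replace (Z.abs_nat (Z.of_nat (S N))) with (S N) in * by lia.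
    replace (Z.abs_nat (- Z.of_nat N)) with N in * by lia.
    pose proof (pow_le_decr r N (S N) ltac:(lra) ltac:(lia)); nra.
Qed.

Lemma Zsum_shift K r f k : Zgeom K r f -> Zsum (fun m => f (m + k)%Z) = Zsum f.
Proof.
  assert (Hnat : forall n K' g, Zgeom K' r g -> Zsum (fun m => g (m + Z.of_nat n)%Z) = Zsum g).
  { induction n as [|n IH]; intros K' g Hg.
    - apply Zsum_ext; intros m; f_equal; lia.
    - transitivity (Zsum (fun m => (fun m' => g (m' + Z.of_nat n)%Z) (m + 1)%Z)).
      + apply Zsum_ext; intros m; f_equal; lia.
      + rewrite (Zsum_shift1 _ _ _ (Zgeom_shift _ _ _ (Z.of_nat n) Hg)); apply (IH _ _ Hg). }
  intros Hf; destruct (Z.le_gt_cases 0 k).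
  - replace k with (Z.of_nat (Z.to_nat k)) by lia; apply (Hnat _ _ _ Hf).
  - rewrite <- (Hnat (Z.to_nat (- k)) _ _ (Zgeom_shift _ _ _ k Hf)).
    apply Zsum_ext; intros m; f_equal; lia.
Qed.

Lemma Zsum_split_parity K r f :
  Zgeom K r f -> Zsum f = Zsum (fun j => f (2 * j)%Z) + Zsum (fun j => f (2 * j + 1)%Z).
Proof.
  intros Hf; pose proof (Zgeom_nonneg _ _ _ Hf) as HK.
  apply (cvg_geom_unique (fun N => Zpart f (2 * N))).
  - apply (cvg_geom_subseq (Zpart f)); [intros; lia|apply (Zsum_cvg_geom _ _ _ Hf)].
  - replace (Zsum (fun j => f (2 * j)%Z) + Zsum (fun j => f (2 * j + 1)%Z))
      with (Zsum (fun j => f (2 * j)%Z) + Zsum (fun j => f (2 * j + 1)%Z) + 0) by ring.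
    apply (cvg_geom_ext _ (fun N => Zpart (fun j => f (2 * j)%Z) N
                             + Zpart (fun j => f (2 * j + 1)%Z) N + - f (2 * Z.of_nat N + 1)%Z));
      [intros; rewrite Zpart_double; ring|].
    apply cvg_geom_plus; [apply cvg_geom_plus|].
    + apply (Zsum_cvg_geom K r), (Zgeom_reindex _ _ _ (fun j => 2 * j)%Z); [intros; lia|exact Hf].
    + apply (Zsum_cvg_geom K r), (Zgeom_reindex _ _ _ (fun j => 2 * j + 1)%Z);
        [intros; lia|exact Hf].
    + destruct Hf as [Hr H]; apply (cvg_geom_0 _ K r); [lra|]; intros N.
      rewrite Cmod_opp; eapply Rle_trans; [apply H|].
      apply Rmult_le_compat_l; [exact HK|]; apply pow_le_decr; [lra|lia].
Qed.

Definition Zgeom2 (K r : R) (F : Z -> Z -> C) : Prop :=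
  (0 < r < 1)%R /\ forall m n, (Cmod (F m n) <= K * r ^ Z.abs_nat m * r ^ Z.abs_nat n)%R.

Lemma Zgeom2_transpose K r F : Zgeom2 K r F -> Zgeom2 K r (fun n m => F m n).
Proof.
  intros [Hr H]; split; [exact Hr|]; intros m n; eapply Rle_trans; [apply H|]; right; ring.
Qed.

Lemma Zgeom2_row K r F m : Zgeom2 K r F -> Zgeom (K * r ^ Z.abs_nat m) r (F m).
Proof. intros [Hr H]; split; [exact Hr|]; apply H. Qed.

Lemma Zgeom2_row_sums K r F :
  Zgeom2 K r F -> Zgeom (K * (1 + 4 / (1 - r))) r (fun m => Zsum (F m)).
Proof.
  intros HF; split; [apply HF|]; intros m.
  eapply Rle_trans; [apply (Zsum_bound _ _ _ (Zgeom2_row _ _ _ m HF))|]; right; ring.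
Qed.

(* The row tails are uniformly geometric in the row index. *)
Lemma Zsum_iter_cvg_geom K r F :
  Zgeom2 K r F ->
  cvg_geom (fun N => Zpart (fun m => Zpart (F m) N) N) (Zsum (fun m => Zsum (F m))).
Proof.
  intros HF; pose proof (Zgeom2_row_sums _ _ _ HF) as Hrows.
  pose proof (Zgeom_nonneg _ _ _ (Zgeom2_row _ _ _ 0%Z HF)) as HK; simpl in HK.
  pose proof HF as [Hr _].
  replace (Zsum (fun m => Zsum (F m))) with (Zsum (fun m => Zsum (F m)) + 0) by ring.
  apply (cvg_geom_ext _ (fun N => Zpart (fun m => Zsum (F m)) N
                           + Zpart (fun m => Zpart (F m) N - Zsum (F m)) N)).
  { intros N; rewrite <- Zpart_plus; f_equal; apply functional_extensionality; intros; ring. }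
  apply cvg_geom_plus; [apply (Zsum_cvg_geom _ _ _ Hrows)|].
  set (B := (4 * K / (1 - r) * r)%R).
  assert (HB : (0 <= B)%R) by (unfold B; apply Rmult_le_pos; [apply Rdiv_le_0_compat|]; lra).
  apply (cvg_geom_0 _ (B * (1 + 8 / (1 - r))) r); [lra|]; intros N.
  assert (Htail : Zgeom (B * r ^ N) r (fun m => Zpart (F m) N - Zsum (F m))).
  { split; [exact Hr|]; intros m; rewrite <- Cmod_opp, Copp_minus_distr.
    eapply Rle_trans; [apply (Zsum_tail _ _ _ (Zgeom2_row _ _ _ m HF))|].
    unfold B; rewrite <- tech_pow_Rmult; right; field; lra. }
  eapply Rle_trans; [apply (Zpart_bound _ _ _ Htail)|]; right; ring.
Qed.

Lemma Zsum_swap K r F :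
  Zgeom2 K r F -> Zsum (fun m => Zsum (fun n => F m n)) = Zsum (fun n => Zsum (fun m => F m n)).
Proof.
  intros HF; apply (cvg_geom_unique (fun N => Zpart (fun m => Zpart (F m) N) N)).
  - apply (Zsum_iter_cvg_geom _ _ _ HF).
  - apply (cvg_geom_ext _ (fun N => Zpart (fun n => Zpart (fun m => F m n) N) N));
      [intros; apply Zpart_swap|].
    apply (Zsum_iter_cvg_geom _ _ _ (Zgeom2_transpose _ _ _ HF)).
Qed.

(* Since |m| + |k + m| >= (|m| + |k|) / 2, the double series decays at rate sqrt r. *)
Lemma Zgeom2_mul_shift Kf Kg r f g :
  Zgeom Kf r f -> Zgeom Kg r g -> Zgeom2 (Kf * Kg) (sqrt r) (fun m k => f m * g (k + m)%Z).
Proof.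
  intros Hf Hg; pose proof (Zgeom_nonneg _ _ _ Hf) as HKf.
  pose proof (Zgeom_nonneg _ _ _ Hg) as HKg.
  destruct Hf as [Hr Hf], Hg as [_ Hg].
  split.
  { split; [apply sqrt_lt_R0; lra|rewrite <- sqrt_1; apply sqrt_lt_1_alt; lra]. }
  intros m k; rewrite Cmod_mult.
  eapply Rle_trans; [apply Rmult_le_compat; [apply Cmod_ge_0|apply Cmod_ge_0|apply Hf|apply Hg]|].
  replace (Kf * r ^ Z.abs_nat m * (Kg * r ^ Z.abs_nat (k + m)))%R
    with (Kf * Kg * sqrt r ^ (2 * (Z.abs_nat m + Z.abs_nat (k + m))))%R
    by (rewrite pow_mult, pow2_sqrt, pow_add by lra; ring).
  rewrite (Rmult_assoc (Kf * Kg) (sqrt r ^ _)), <- pow_add.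
  apply Rmult_le_compat_l; [apply Rmult_le_pos; lra|].
  apply pow_le_decr; [split; [apply sqrt_pos|rewrite <- sqrt_1; apply sqrt_le_1_alt; lra]|lia].
Qed.

Lemma Zsum_mul_split Kf Kg r f g :
  Zgeom Kf r f -> Zgeom Kg r g ->
  Zsum f * Zsum g = Zsum (fun j => Zsum (fun m => f m * g (2 * j + m)%Z))
                  + Zsum (fun j => Zsum (fun m => f m * g (2 * j + 1 + m)%Z)).
Proof.
  intros Hf Hg; pose proof (Zgeom2_mul_shift _ _ _ _ _ Hf Hg) as H2.
  transitivity (Zsum (fun m => Zsum (fun k => f m * g (k + m)%Z))).
  { rewrite <- (Zsum_scal_r _ _ _ _ Hf); apply Zsum_ext; intros m.
    rewrite <- (Zsum_scal_l _ _ _ _ Hg).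
    symmetry; apply (Zsum_shift _ _ (fun n => f m * g n) m (Zgeom_scal (f m) _ _ _ Hg)). }
  rewrite (Zsum_swap _ _ _ H2).
  apply (Zsum_split_parity _ _ _ (Zgeom2_row_sums _ _ _ (Zgeom2_transpose _ _ _ H2))).
Qed.

Lemma Zsum_iter_factor Ku Kv r u v (s : Z) (F : Z -> Z -> C) :
  Zgeom Ku r u -> Zgeom Kv r v -> (forall j m, F j m = u (m + (j + s))%Z * v j) ->
  Zsum (fun j => Zsum (F j)) = Zsum u * Zsum v.
Proof.
  intros Hu Hv HF; rewrite <- (Zsum_scal_l _ _ _ _ Hv); apply Zsum_ext; intros j.
  rewrite <- (Zsum_shift _ _ _ (j + s) Hu), <- (Zsum_scal_r _ _ _ _ (Zgeom_shift _ _ _ (j + s) Hu)).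
  apply Zsum_ext; apply HF.
Qed.

(** * Theta series, duplication and Jacobi's identity *)

Lemma Cexp_add u v : Cexp (u + v) = Cexp u * Cexp v.
Proof.
  destruct u as [a b], v as [c d]; unfold Cexp, Cmult, Cplus, Re, Im; simpl.
  rewrite exp_plus, cos_plus, sin_plus; f_equal; ring.
Qed.

Lemma Cmod_Cexp u : Cmod (Cexp u) = exp (Re u).
Proof.
  destruct u as [a b]; unfold Cexp, Cmod, Re, Im; simpl.
  replace (exp a * cos b * (exp a * cos b * 1) + exp a * sin b * (exp a * sin b * 1))%R
    with (exp a ^ 2)%R by (pose proof (sin2_cos2 b); unfold Rsqr in *; simpl; nra).
  apply sqrt_pow2; left; apply exp_pos.
Qed.

Lemma exp_pow_nat x n : (exp x ^ n = exp (INR n * x))%R.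
Proof. rewrite <- Rpower_pow by apply exp_pos; unfold Rpower; rewrite ln_exp; reflexivity. Qed.

Lemma exp_le_exp x y : (x <= y)%R -> (exp x <= exp y)%R.
Proof. intros [H|H]; [left; apply exp_increasing, H|subst; lra]. Qed.

Definition qmod (z : C) : R := exp (- (PI * Im z)).

Lemma qmod_bounds z : (0 < Im z)%R -> (0 < qmod z < 1)%R.
Proof.
  intros Hz; unfold qmod; split; [apply exp_pos|]; rewrite <- exp_0.
  apply exp_increasing; pose proof PI_RGT_0; nra.
Qed.

Lemma qmod_double z : qmod (RtoC 2 * z) = (qmod z ^ 2)%R.
Proof.
  unfold qmod; rewrite exp_pow_nat; f_equal; destruct z as [x y]; unfold Im; simpl; ring.
Qed.

Lemma qpow_add z a b : qpow z a * qpow z b = qpow z (a + b).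
Proof. unfold qpow; rewrite <- Cexp_add, RtoC_plus; f_equal; ring. Qed.

Lemma qpow_0 z : qpow z 0 = 1.
Proof.
  unfold qpow; replace (RtoC PI * Ci * z * RtoC 0) with (RtoC 0) by ring.
  unfold Cexp; simpl; rewrite exp_0, cos_0, sin_0; apply injective_projections; simpl; ring.
Qed.

Lemma Cmod_qpow z a : Cmod (qpow z a) = exp (- (PI * Im z * a)).
Proof. unfold qpow; rewrite Cmod_Cexp; f_equal; destruct z; unfold Re, Im; simpl; ring. Qed.

Lemma qpow_mul_double z a b c d :
  ((a + b) / 2 = c + d)%R -> qpow z a * qpow z b = qpow (RtoC 2 * z) c * qpow (RtoC 2 * z) d.
Proof.
  intros H; rewrite !qpow_add, <- H; unfold qpow; f_equal.
  rewrite RtoC_div, RtoC_plus by discrR; field.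
Qed.

Lemma Zgeom_qpow z (c : R) (e : Z -> R) :
  (0 < Im z)%R -> (forall m, IZR (Z.abs m) - c <= e m)%R ->
  Zgeom (exp (PI * Im z * c)) (qmod z) (fun m => qpow z (e m)).
Proof.
  intros Hz He; split; [apply qmod_bounds, Hz|]; intros m.
  rewrite Cmod_qpow; unfold qmod; rewrite exp_pow_nat, <- exp_plus; apply exp_le_exp.
  rewrite INR_IZR_INZ, Zabs2Nat.id_abs; pose proof PI_RGT_0; specialize (He m).
  assert (0 < PI * Im z)%R by nra; nra.
Qed.

Definition theta3_term (z : C) (m : Z) : C := qpow z (IZR m ^ 2)%R.
Definition theta2_term (z : C) (m : Z) : C := qpow z ((IZR m + /2) ^ 2)%R.
Definition sign_sq (m : Z) : C := RtoC ((-1) ^ Z.to_nat (m * m))%R.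
Definition theta4_term (z : C) (m : Z) : C := sign_sq m * theta3_term z m.

Lemma sign_sq_parity m : sign_sq m = if Z.even m then 1 else - (1).
Proof.
  unfold sign_sq; destruct (Z.Even_or_Odd m) as [[t ->]|[t ->]].
  - rewrite Z.even_even.
    replace (Z.to_nat (2 * t * (2 * t))) with (2 * Z.to_nat (2 * t * t))%nat by nia.
    rewrite pow_1_even; reflexivity.
  - rewrite Z.even_odd.
    replace (Z.to_nat ((2 * t + 1) * (2 * t + 1))) with (S (2 * Z.to_nat (2 * t * t + 2 * t)))%nat
      by nia.
    rewrite pow_1_odd; unfold RtoC, Copp; simpl; f_equal; ring.
Qed.

Lemma sign_sq_mul_even j m : sign_sq m * sign_sq (2 * j + m) = 1.
Proof. rewrite !sign_sq_parity, Z.add_comm, Z.even_add_mul_2; destruct (Z.even m); ring. Qed.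

Lemma sign_sq_mul_odd j m : sign_sq m * sign_sq (2 * j + 1 + m) = - (1).
Proof.
  rewrite !sign_sq_parity; replace (2 * j + 1 + m)%Z with (m + 1 + 2 * j)%Z by ring.
  rewrite Z.even_add_mul_2, Z.even_add; destruct (Z.even m); simpl; ring.
Qed.

Lemma Cpow_2 (x : C) : x ^ 2 = x * x.
Proof. ring. Qed.

Lemma IZR_abs_le_sq_add m : (IZR (Z.abs m) - 1 <= IZR m ^ 2 + IZR m)%R.
Proof.
  assert (Hm : (Z.abs m - 1 <= m * m + m)%Z) by nia.
  apply IZR_le in Hm; rewrite minus_IZR, plus_IZR, mult_IZR in Hm; simpl; lra.
Qed.

Section ThetaTerms.
Variable z : C.
Hypothesis Hz : (0 < Im z)%R.

Lemma Zgeom_theta3_term : Zgeom 1 (qmod z) (theta3_term z).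
Proof.
  rewrite <- exp_0, <- (Rmult_0_r (PI * Im z)); apply (Zgeom_qpow z 0 (fun m => IZR m ^ 2)%R Hz).
  intros m; assert (Hm : (Z.abs m <= m * m)%Z) by nia.
  apply IZR_le in Hm; rewrite mult_IZR in Hm; simpl; lra.
Qed.

Lemma Zgeom_theta2_term : Zgeom (exp (PI * Im z * 1)) (qmod z) (theta2_term z).
Proof.
  apply (Zgeom_qpow z 1 (fun m => (IZR m + /2) ^ 2)%R Hz).
  intros m; pose proof (IZR_abs_le_sq_add m); lra.
Qed.

Lemma Zgeom_theta4_term : Zgeom 1 (qmod z) (theta4_term z).
Proof.
  destruct Zgeom_theta3_term as [Hr H]; split; [exact Hr|]; intros m.
  unfold theta4_term; rewrite Cmod_mult, sign_sq_parity.
  destruct (Z.even m); rewrite ?Cmod_opp, Cmod_1, Rmult_1_l; apply H.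
Qed.
End ThetaTerms.

Lemma Im_double_pos z : (0 < Im z)%R -> (0 < Im (RtoC 2 * z))%R.
Proof. destruct z as [x y]; unfold Im; simpl; lra. Qed.

Section Duplication.
Variable z : C.
Hypothesis Hz : (0 < Im z)%R.
Let w := RtoC 2 * z.
Let Hw : (0 < Im w)%R := Im_double_pos z Hz.

Lemma theta3_sq_double : theta3 z ^ 2 = theta3 w ^ 2 + theta2 w ^ 2.
Proof.
  change (Zsum (theta3_term z) ^ 2 = Zsum (theta3_term w) ^ 2 + Zsum (theta2_term w) ^ 2).
  rewrite !Cpow_2.
  rewrite (Zsum_mul_split _ _ _ _ _ (Zgeom_theta3_term z Hz) (Zgeom_theta3_term z Hz)); f_equal.
  - apply (Zsum_iter_factor _ _ _ _ _ 0 _ (Zgeom_theta3_term w Hw) (Zgeom_theta3_term w Hw)).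
    intros j m; apply qpow_mul_double; rewrite !plus_IZR, !mult_IZR; field.
  - apply (Zsum_iter_factor _ _ _ _ _ 0 _ (Zgeom_theta2_term w Hw) (Zgeom_theta2_term w Hw)).
    intros j m; apply qpow_mul_double; rewrite !plus_IZR, !mult_IZR; field.
Qed.

Lemma theta4_sq_double : theta4 z ^ 2 = theta3 w ^ 2 - theta2 w ^ 2.
Proof.
  change (Zsum (theta4_term z) ^ 2 = Zsum (theta3_term w) ^ 2 - Zsum (theta2_term w) ^ 2).
  rewrite !Cpow_2.
  rewrite (Zsum_mul_split _ _ _ _ _ (Zgeom_theta4_term z Hz) (Zgeom_theta4_term z Hz)).
  replace (_ - _) with (Zsum (theta3_term w) * Zsum (theta3_term w)
                       + Zsum (theta2_term w) * (- (1) * Zsum (theta2_term w))) by ring.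
  rewrite <- (Zsum_scal_l (- (1)) _ _ _ (Zgeom_theta2_term w Hw)); f_equal.
  - apply (Zsum_iter_factor _ _ _ _ _ 0 _ (Zgeom_theta3_term w Hw) (Zgeom_theta3_term w Hw)).
    intros j m; unfold theta4_term.
    transitivity ((sign_sq m * sign_sq (2 * j + m))
                  * (theta3_term z m * theta3_term z (2 * j + m)));
      [ring|rewrite sign_sq_mul_even, Cmult_1_l].
    apply qpow_mul_double; rewrite !plus_IZR, !mult_IZR; field.
  - apply (Zsum_iter_factor _ _ _ _ _ 0 _ (Zgeom_theta2_term w Hw)
             (Zgeom_scal (- (1)) _ _ _ (Zgeom_theta2_term w Hw))).
    intros j m; unfold theta4_term.
    transitivity ((sign_sq m * sign_sq (2 * j + 1 + m))
                  * (theta3_term z m * theta3_term z (2 * j + 1 + m)));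
      [ring|rewrite sign_sq_mul_odd; unfold theta3_term].
    rewrite (qpow_mul_double _ _ _ ((IZR (m + (j + 0)) + /2) ^ 2) ((IZR j + /2) ^ 2))
      by (rewrite !plus_IZR, !mult_IZR; field).
    unfold theta2_term, w; ring.
Qed.

Lemma theta2_sq_double : theta2 z ^ 2 = 2 * theta2 w * theta3 w.
Proof.
  change (Zsum (theta2_term z) ^ 2 = 2 * Zsum (theta2_term w) * Zsum (theta3_term w)).
  rewrite Cpow_2.
  rewrite (Zsum_mul_split _ _ _ _ _ (Zgeom_theta2_term z Hz) (Zgeom_theta2_term z Hz)).
  replace (2 * _ * _) with (Zsum (theta2_term w) * Zsum (theta3_term w)
                            + Zsum (theta3_term w) * Zsum (theta2_term w)) by ring.
  f_equal.
  - apply (Zsum_iter_factor _ _ _ _ _ 0 _ (Zgeom_theta2_term w Hw) (Zgeom_theta3_term w Hw)).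
    intros j m; apply qpow_mul_double; rewrite !plus_IZR, !mult_IZR; field.
  - apply (Zsum_iter_factor _ _ _ _ _ 1 _ (Zgeom_theta3_term w Hw) (Zgeom_theta2_term w Hw)).
    intros j m; apply qpow_mul_double; rewrite !plus_IZR, !mult_IZR; field.
Qed.

End Duplication.

Lemma jacobi_identity z : (0 < Im z)%R -> theta3 z ^ 4 = theta2 z ^ 4 + theta4 z ^ 4.
Proof.
  intros Hz; replace 4%nat with (2 * 2)%nat by reflexivity; rewrite !Cpow_mult_r.
  rewrite (theta3_sq_double z Hz), (theta2_sq_double z Hz), (theta4_sq_double z Hz); ring.
Qed.

Lemma theta_prod_sq_double z :
  (0 < Im z)%R ->
  (theta2 z * theta3 z * theta4 z) ^ 2
  = 2 * (theta2 (RtoC 2 * z) * theta3 (RtoC 2 * z) * theta4 (RtoC 2 * z)) * theta4 (RtoC 2 * z) ^ 3.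
Proof.
  intros Hz; pose proof (jacobi_identity _ (Im_double_pos z Hz)) as J.
  rewrite !Cpow_mult_l, (theta2_sq_double z Hz), (theta3_sq_double z Hz), (theta4_sq_double z Hz).
  set (w := RtoC 2 * z) in *.
  transitivity (2 * theta2 w * theta3 w * (theta3 w ^ 4 - theta2 w ^ 4)); [ring|rewrite J; ring].
Qed.

(** * Non-vanishing of the theta functions *)

Lemma Zsum_neq0 K r f N :
  Zgeom K r f -> (4 * K / (1 - r) * r ^ S N < Cmod (Zpart f N))%R -> Zsum f <> 0.
Proof.
  intros Hf Hlt H0; pose proof (Zsum_tail _ _ _ Hf N) as T.
  rewrite H0 in T; replace (0 - Zpart f N) with (- Zpart f N) in T by ring.
  rewrite Cmod_opp in T; lra.
Qed.

Lemma theta3_term_0 z : theta3_term z 0 = 1.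
Proof. unfold theta3_term; replace (IZR 0 ^ 2)%R with 0%R by (simpl; ring); apply qpow_0. Qed.

(* For |q| <= 1/10 the leading terms dominate: theta3 and theta4 start with 1,
   and theta2 = q^(1/4) (2 + 2 q^2 + ...). *)
Section SmallNome.
Variable z : C.
Hypothesis Hz : (0 < Im z)%R.
Hypothesis Hq : (qmod z <= / 10)%R.

Let tail_small : (4 / (1 - qmod z) * qmod z <= 4 / 9)%R.
Proof.
  pose proof (qmod_bounds z Hz); apply Rmult_le_reg_r with (1 - qmod z)%R; [lra|].
  replace (4 / (1 - qmod z) * qmod z * (1 - qmod z))%R with (4 * qmod z)%R by (field; lra); lra.
Qed.

Lemma theta3_neq0_small_q : theta3 z <> 0.
Proof.
  pose proof (qmod_bounds z Hz); pose proof tail_small as Hsmall.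
  apply (Zsum_neq0 _ _ _ 0 (Zgeom_theta3_term z Hz)).
  simpl Zpart; rewrite theta3_term_0, Cmod_1.
  replace (4 * 1 / (1 - qmod z) * qmod z ^ 1)%R with (4 / (1 - qmod z) * qmod z)%R
    by (simpl; field; lra); lra.
Qed.

Lemma theta4_neq0_small_q : theta4 z <> 0.
Proof.
  pose proof (qmod_bounds z Hz); pose proof tail_small as Hsmall.
  apply (Zsum_neq0 _ _ _ 0 (Zgeom_theta4_term z Hz)).
  simpl Zpart; unfold theta4_term; rewrite theta3_term_0, Cmult_1_r.
  replace (sign_sq 0%Z) with (RtoC 1) by (rewrite sign_sq_parity; reflexivity); rewrite Cmod_1.
  replace (4 * 1 / (1 - qmod z) * qmod z ^ 1)%R with (4 / (1 - qmod z) * qmod z)%R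
    by (simpl; field; lra); lra.
Qed.

Lemma theta2_neq0_small_q : theta2 z <> 0.
Proof.
  pose proof (qmod_bounds z Hz) as Hr; pose proof tail_small as Hsmall; set (r := qmod z) in *.
  set (te := fun m : Z => qpow z (IZR m ^ 2 + IZR m)%R).
  assert (Hte : Zgeom (exp (PI * Im z * 1)) r te).
  { apply (Zgeom_qpow z 1 _ Hz), IZR_abs_le_sq_add. }
  replace (theta2 z) with (qpow z (/ 4) * Zsum te).
  2:{ rewrite <- (Zsum_scal_l _ _ _ _ Hte); apply Zsum_ext; intros m.
      unfold te; rewrite qpow_add; f_equal; field. }
  apply Cmult_neq_0.
  { intros H; pose proof (Cmod_qpow z (/ 4)) as M; rewrite H, Cmod_0 in M.
    pose proof (exp_pos (- (PI * Im z * / 4))); lra. }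
  apply (Zsum_neq0 _ _ _ 1 Hte).
  assert (P1 : Zpart te 1 = 2 + te 1%Z).
  { unfold Zpart, Zpair, te; simpl IZR.
    replace (0 ^ 2 + 0)%R with 0%R by ring; replace ((-1) ^ 2 + -1)%R with 0%R by ring.
    rewrite qpow_0; ring. }
  assert (Hte1 : Cmod (te 1%Z) = (r ^ 2)%R).
  { unfold te, r, qmod; rewrite Cmod_qpow, exp_pow_nat; f_equal; simpl; ring. }
  assert (Hmod : (2 - r ^ 2 <= Cmod (2 + te 1%Z))%R).
  { pose proof (Cmod_triangle (2 + te 1%Z) (- te 1%Z)) as T.
    replace (2 + te 1%Z + - te 1%Z) with (RtoC 2) in T by ring.
    rewrite Cmod_opp, Cmod_R, Rabs_pos_eq in T by lra; lra. }
  assert (Hexp : (exp (PI * Im z * 1) * r = 1)%R).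
  { unfold r, qmod; rewrite <- exp_plus.
    replace (PI * Im z * 1 + - (PI * Im z))%R with 0%R by ring; apply exp_0. }
  rewrite P1; replace (4 * exp (PI * Im z * 1) / (1 - r) * r ^ 2)%R
    with (4 / (1 - r) * r * (exp (PI * Im z * 1) * r))%R by (field; lra).
  rewrite Hexp; simpl in Hmod; nra.
Qed.
End SmallNome.

(* Descend from q^(2^j), where the constant terms dominate, through the
   duplication formula for the product. *)
Lemma theta_prod_neq0 z : (0 < Im z)%R -> theta2 z * theta3 z * theta4 z <> 0.
Proof.
  assert (Hiter : forall j z, (0 < Im z)%R -> (qmod z ^ (2 ^ j) <= / 10)%R ->
                    theta2 z * theta3 z * theta4 z <> 0).
  { induction j as [|j IH]; intros w Hw Hq.
    - rewrite pow_1 in Hq.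
      repeat apply Cmult_neq_0;
        [apply theta2_neq0_small_q|apply theta3_neq0_small_q|apply theta4_neq0_small_q]; assumption.
    - assert (Hw2 := IH _ (Im_double_pos w Hw)).
      rewrite qmod_double, <- pow_mult, <- Nat.pow_succ_r' in Hw2; specialize (Hw2 Hq).
      intros H0; pose proof (theta_prod_sq_double w Hw) as D; rewrite H0 in D.
      set (w2 := RtoC 2 * w) in *.
      assert (H4 : theta4 w2 <> 0) by (intros E; apply Hw2; rewrite E; ring).
      assert (H2 : RtoC 2 <> 0) by (intros E; apply (f_equal Re) in E; simpl in E; lra).
      apply (Cmult_neq_0 _ _ (Cmult_neq_0 _ _ H2 Hw2) (Cpow_nz _ 3 H4)); rewrite <- D; ring. }
  intros Hz; pose proof (qmod_bounds z Hz) as Hr.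
  destruct (pow_lt_1_zero (qmod z) ltac:(rewrite Rabs_pos_eq; lra) (/ 10) ltac:(lra)) as [N HN].
  apply (Hiter N z Hz); specialize (HN N (le_n N)).
  rewrite Rabs_pos_eq in HN by (apply pow_le; lra).
  pose proof (Nat.pow_gt_lin_r 2 N ltac:(lia)).
  pose proof (pow_le_decr (qmod z) N (2 ^ N) ltac:(lra) ltac:(lia)); lra.
Qed.

(** * A binomial sum satisfying the power-sum recurrence *)

(* Stdlib's [Binomial.C n k] is n! / (k! (n-k)!) with truncated subtraction,
   which is not 0 for k > n. *)
Definition binom (n k : nat) : R := if (k <=? n)%nat then Binomial.C n k else 0%R.

Lemma binom_binomR n k : (k <= n)%nat -> binom n k = binomR n k.
Proof. intros H; unfold binom; destruct (Nat.leb_spec k n); [reflexivity|lia]. Qed.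

Lemma binom_gt n k : (n < k)%nat -> binom n k = 0%R.
Proof. intros H; unfold binom; destruct (Nat.leb_spec k n); [lia|reflexivity]. Qed.

Lemma binom_0 n : binom n 0 = 1%R.
Proof. apply C_n_0. Qed.

Lemma binom_pascal n k : binom (S n) (S k) = (binom n k + binom n (S k))%R.
Proof.
  unfold binom; destruct (Nat.leb_spec (S k) (S n)), (Nat.leb_spec k n), (Nat.leb_spec (S k) n);
    try lia.
  - symmetry; apply pascal; lia.
  - replace k with n by lia; rewrite !C_n_n; ring.
  - ring.
Qed.

Lemma binom_succ_r m k : (k < m)%nat -> binom m (S k) = (INR (m - k) / INR (S k) * binom m k)%R.
Proof.
  intros H; unfold binom; destruct (Nat.leb_spec (S k) m), (Nat.leb_spec k m); try lia.
  apply pascal_step3; lia.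
Qed.

(* Coquelicot states these for the generic [plus] and [mult]; restated with
   [Cplus] and [Cmult] so that [rewrite] finds them. *)
Lemma sum_n_Cplus (f g : nat -> C) n : sum_n (fun i => f i + g i) n = sum_n f n + sum_n g n.
Proof. exact (sum_n_plus f g n). Qed.

Lemma sum_n_Cmult_l (c : C) f n : sum_n (fun i => c * f i) n = c * sum_n f n.
Proof. exact (sum_n_mult_l (K := C_Ring) c f n). Qed.

Lemma sum_n_Cext_loc (f g : nat -> C) n :
  (forall i, (i <= n)%nat -> f i = g i) -> sum_n f n = sum_n g n.
Proof. exact (sum_n_ext_loc f g n). Qed.

Lemma sum_n_succ_r (f : nat -> C) n : sum_n f (S n) = sum_n f n + f (S n).
Proof. exact (sum_Sn f n). Qed.

Lemma sum_n_succ_l (f : nat -> C) n : sum_n f (S n) = f O + sum_n (fun i => f (S i)) n.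
Proof. unfold sum_n; rewrite sum_Sn_m by lia; rewrite <- sum_n_m_S; reflexivity. Qed.

Lemma sum_n_trunc (f : nat -> C) m n :
  (m <= n)%nat -> (forall i, (m < i <= n)%nat -> f i = 0) -> sum_n f n = sum_n f m.
Proof.
  intros Hmn; induction Hmn as [|n Hmn IH]; intros H0; [reflexivity|].
  rewrite sum_n_succ_r, IH by (intros; apply H0; lia); rewrite H0 by lia; apply Cplus_0_r.
Qed.

Section BinomialSums.
Variables E X : C.

Definition binterm_even (n i : nat) : C :=
  RtoC (binom (n - i) (2 * i)) * X ^ i * E ^ (n - 3 * i).
Definition binterm_odd (n i : nat) : C :=
  RtoC (binom (n - i) (2 * i + 1)) * X ^ i * E ^ (n - 3 * i - 1).
Definition binsum_even (n : nat) : C := sum_n (binterm_even n) n.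
Definition binsum_odd (n : nat) : C := sum_n (binterm_odd n) n.

Lemma binterm_odd_succ n i :
  (i <= n)%nat -> binterm_odd (S n) i = E * binterm_odd n i + binterm_even n i.
Proof.
  intros Hi; unfold binterm_odd, binterm_even.
  replace (S n - i)%nat with (S (n - i)) by lia; replace (2 * i + 1)%nat with (S (2 * i)) by lia.
  rewrite binom_pascal, RtoC_plus; replace (S n - 3 * i - 1)%nat with (n - 3 * i)%nat by lia.
  destruct (Compare_dec.le_lt_dec (3 * i + 1) n) as [h|h].
  - assert (HE : E ^ (n - 3 * i) = E * E ^ (n - 3 * i - 1))
      by (rewrite <- Cpow_S; f_equal; lia).
    rewrite HE; ring.
  - rewrite (binom_gt (n - i) (S (2 * i))) by lia.
    destruct (Nat.eq_dec (3 * i) n) as [e|e]; [|rewrite (binom_gt (n - i) (2 * i)) by lia]; ring.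
Qed.

Lemma binterm_even_succ2 n i :
  (i <= n)%nat -> binterm_even (S (S n)) (S i) = E * binterm_even (S n) (S i) + X * binterm_odd n i.
Proof.
  intros Hi; unfold binterm_odd, binterm_even.
  replace (S (S n) - S i)%nat with (S (n - i)) by lia.
  replace (S n - S i)%nat with (n - i)%nat by lia.
  replace (2 * S i)%nat with (S (2 * i + 1)) by lia.
  rewrite binom_pascal, RtoC_plus, !Cpow_S.
  replace (S (S n) - 3 * S i)%nat with (n - 3 * i - 1)%nat by lia.
  destruct (Compare_dec.le_lt_dec (3 * i + 2) n) as [h|h].
  - assert (HE : E ^ (n - 3 * i - 1) = E * E ^ (S n - 3 * S i))
      by (rewrite <- Cpow_S; f_equal; lia).
    rewrite HE; ring.
  - rewrite (binom_gt (n - i) (S (2 * i + 1))) by lia.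
    destruct (Nat.eq_dec (3 * i + 1) n) as [e|e];
      [|rewrite (binom_gt (n - i) (2 * i + 1)) by lia]; ring.
Qed.

Lemma binsum_odd_succ n : binsum_odd (S n) = E * binsum_odd n + binsum_even n.
Proof.
  unfold binsum_odd, binsum_even; rewrite sum_n_succ_r.
  replace (binterm_odd (S n) (S n)) with (RtoC 0)
    by (unfold binterm_odd; rewrite binom_gt by lia; ring).
  rewrite Cplus_0_r, <- sum_n_Cmult_l, <- sum_n_Cplus.
  apply sum_n_Cext_loc; intros i Hi; apply binterm_odd_succ, Hi.
Qed.

Lemma binsum_even_succ2 n : binsum_even (S (S n)) = E * binsum_even (S n) + X * binsum_odd n.
Proof.
  unfold binsum_odd, binsum_even.
  rewrite (sum_n_succ_l (binterm_even (S (S n)))), (sum_n_succ_l (binterm_even (S n))).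
  rewrite sum_n_succ_r.
  replace (binterm_even (S (S n)) (S (S n))) with (RtoC 0)
    by (unfold binterm_even; rewrite binom_gt by lia; ring).
  replace (binterm_even (S (S n)) 0) with (E * binterm_even (S n) 0)
    by (unfold binterm_even; rewrite !binom_0;
        replace (S (S n) - 3 * 0)%nat with (S (S n - 3 * 0)) by lia; rewrite Cpow_S; ring).
  rewrite Cplus_0_r.
  transitivity (E * binterm_even (S n) 0
                + sum_n (fun i => E * binterm_even (S n) (S i) + X * binterm_odd n i) n).
  { f_equal; apply sum_n_Cext_loc; intros i Hi; apply binterm_even_succ2, Hi. }
  rewrite sum_n_Cplus, !sum_n_Cmult_l; ring.
Qed.

Definition rec3 (u : nat -> C) : Prop :=
  forall n, u (S (S (S n))) = 2 * E * u (S (S n)) - E ^ 2 * u (S n) + X * u n.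

Lemma rec3_ext u v :
  rec3 u -> rec3 v -> u 0%nat = v 0%nat -> u 1%nat = v 1%nat -> u 2%nat = v 2%nat ->
  forall n, u n = v n.
Proof.
  intros Hu Hv H0 H1 H2.
  assert (H : forall n, u n = v n /\ u (S n) = v (S n) /\ u (S (S n)) = v (S (S n))).
  { induction n as [|n (IH0 & IH1 & IH2)]; [auto|].
    repeat split; auto; rewrite Hu, Hv, IH0, IH1, IH2; reflexivity. }
  intros n; apply H.
Qed.

Lemma rec3_sub u v : rec3 u -> rec3 v -> rec3 (fun n => u n - v n).
Proof. intros Hu Hv n; rewrite Hu, Hv; ring. Qed.

Lemma rec3_scal c u : rec3 u -> rec3 (fun n => c * u n).
Proof. intros Hu n; rewrite Hu; ring. Qed.

(* The characteristic polynomial of [rec3] in the variable t = x^2 is t (t - E)^2 - X. *)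
Lemma rec3_odd_pow x : x ^ 2 * (x ^ 2 - E) ^ 2 = X -> rec3 (fun n => x ^ (2 * n + 3)).
Proof.
  intros Hx n; rewrite <- Hx.
  replace (2 * S (S (S n)) + 3)%nat with (2 * n + 3 + 6)%nat by lia.
  replace (2 * S (S n) + 3)%nat with (2 * n + 3 + 4)%nat by lia.
  replace (2 * S n + 3)%nat with (2 * n + 3 + 2)%nat by lia.
  rewrite !Cpow_add_r; ring.
Qed.

Lemma binsum_even_rec3 : rec3 binsum_even.
Proof.
  intros n; rewrite (binsum_even_succ2 (S n)), (binsum_odd_succ n).
  replace (X * (E * binsum_odd n + binsum_even n))
    with (E * (X * binsum_odd n) + X * binsum_even n) by ring.
  replace (X * binsum_odd n) with (binsum_even (S (S n)) - E * binsum_even (S n))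
    by (rewrite binsum_even_succ2; ring).
  ring.
Qed.

Lemma binsum_odd_rec3 : rec3 binsum_odd.
Proof.
  intros n; rewrite (binsum_odd_succ (S (S n))), (binsum_even_succ2 n).
  replace (binsum_even (S n)) with (binsum_odd (S (S n)) - E * binsum_odd (S n))
    by (rewrite (binsum_odd_succ (S n)); ring).
  ring.
Qed.

Definition binsum (n : nat) : C := 3 * binsum_even n + 2 * E * binsum_odd n.

Lemma binsum_rec3 : rec3 binsum.
Proof. intros n; unfold binsum; rewrite binsum_even_rec3, binsum_odd_rec3; ring. Qed.

Lemma binsum_initial : binsum 0 = 3 /\ binsum 1 = 5 * E /\ binsum 2 = 7 * E ^ 2.
Proof.
  assert (A0 : binsum_even 0 = 1).
  { unfold binsum_even, binterm_even; rewrite sum_O; cbn [Nat.sub Nat.mul Nat.add].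
    rewrite binom_0; simpl; ring. }
  assert (D0 : binsum_odd 0 = 0).
  { unfold binsum_odd, binterm_odd; rewrite sum_O, binom_gt by lia; ring. }
  assert (A1 : binsum_even 1 = E).
  { unfold binsum_even, binterm_even; rewrite sum_n_succ_r, sum_O; cbn [Nat.sub Nat.mul Nat.add].
    rewrite binom_0, (binom_gt 0 2) by lia; simpl; ring. }
  assert (D1 : binsum_odd 1 = 1).
  { unfold binsum_odd, binterm_odd; rewrite sum_n_succ_r, sum_O; cbn [Nat.sub Nat.mul Nat.add].
    rewrite (binom_gt 0 3) by lia; unfold binom; simpl; rewrite C_n_n; ring. }
  unfold binsum; rewrite (binsum_even_succ2 0), (binsum_odd_succ 1), A0, D0, A1, D1.
  repeat split; ring.
Qed.
End BinomialSums.

Lemma odd_power_sum a b n :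
  (a + b) ^ (2 * n + 3) - a ^ (2 * n + 3) - b ^ (2 * n + 3)
  = a * b * (a + b) * binsum (a ^ 2 + a * b + b ^ 2) ((a * b * (a + b)) ^ 2) n.
Proof.
  set (E := a ^ 2 + a * b + b ^ 2); set (X := (a * b * (a + b)) ^ 2).
  destruct (binsum_initial E X) as (T0 & T1 & T2).
  apply (rec3_ext E X (fun n => (a + b) ^ (2 * n + 3) - a ^ (2 * n + 3) - b ^ (2 * n + 3))
                      (fun n => a * b * (a + b) * binsum E X n)).
  - repeat apply rec3_sub; apply rec3_odd_pow; unfold E, X; ring.
  - apply rec3_scal, binsum_rec3.
  - rewrite T0; simpl; ring.
  - rewrite T1; unfold E; simpl; ring.
  - rewrite T2; unfold E; simpl; ring.
Qed.

Lemma binsum_term_split E X n i :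
  (3 * i <= n)%nat ->
  RtoC (INR (2 * n + 3) / INR (2 * i + 1) * binom (n - i) (2 * i)) * X ^ i * E ^ (n - 3 * i)
  = 3 * binterm_even E X n i + 2 * E * binterm_odd E X n i.
Proof.
  intros H; unfold binterm_even, binterm_odd.
  assert (Hs : INR (2 * i + 1) <> 0%R) by (apply not_0_INR; lia).
  destruct (Nat.eq_dec (3 * i) n) as [e|e].
  - rewrite (binom_gt (n - i) (2 * i + 1)) by lia.
    replace (INR (2 * n + 3) / INR (2 * i + 1))%R with 3%R.
    + rewrite RtoC_mult; ring.
    + subst n; rewrite !plus_INR, !mult_INR in *; simpl in *; field; lra.
  - replace (2 * i + 1)%nat with (S (2 * i)) at 2 by lia.
    rewrite (binom_succ_r (n - i) (2 * i)) by lia.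
    assert (HE : E ^ (n - 3 * i) = E * E ^ (n - 3 * i - 1)) by (rewrite <- Cpow_S; f_equal; lia).
    rewrite HE; set (B := binom (n - i) (2 * i)).
    replace (INR (2 * n + 3) / INR (2 * i + 1) * B)%R
      with (3 * B + 2 * (INR (n - i - 2 * i) / INR (S (2 * i)) * B))%R.
    + rewrite !RtoC_plus, !RtoC_mult; ring.
    + replace (S (2 * i)) with (2 * i + 1)%nat by lia.
      replace (n - i - 2 * i)%nat with (n - 3 * i)%nat by lia.
      rewrite minus_INR by lia; rewrite !plus_INR, !mult_INR in *; simpl in *; field; lra.
Qed.

Lemma binsum_closed_form E X n :
  binsum E X n
  = sum_n (fun i => RtoC (INR (2 * n + 3) / INR (2 * i + 1) * binom (n - i) (2 * i))
                    * X ^ i * E ^ (n - 3 * i)) (n / 3).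
Proof.
  pose proof (Nat.div_mod n 3 ltac:(lia)); pose proof (Nat.mod_upper_bound n 3 ltac:(lia)).
  unfold binsum, binsum_even, binsum_odd.
  rewrite <- !sum_n_Cmult_l, <- sum_n_Cplus, (sum_n_trunc _ (n / 3) n) by
    (lia || (intros i Hi; unfold binterm_even, binterm_odd; rewrite !binom_gt by lia; ring)).
  apply sum_n_Cext_loc; intros i Hi; symmetry; apply binsum_term_split; lia.
Qed.

Section ThetaIdentities.
Variable z : C.
Hypothesis Hz : (0 < Im z)%R.
Let a := theta2 z ^ 4.
Let b := theta4 z ^ 4.

Lemma E4_jacobi : E4 z = a ^ 2 + a * b + b ^ 2.
Proof.
  unfold E4, a, b; replace (theta3 z ^ 8) with ((theta3 z ^ 4) ^ 2) by ring.
  rewrite (jacobi_identity z Hz); field.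
Qed.

Lemma Delta24_jacobi : 2 ^ 8 * Delta24 z = (a * b * (a + b)) ^ 2.
Proof.
  unfold Delta24, a, b; rewrite <- (jacobi_identity z Hz); field.
Qed.

Lemma rho_binsum n : rho n z = binsum (E4 z) (2 ^ 8 * Delta24 z) n.
Proof.
  assert (Hab : a * b * (a + b) <> 0).
  { unfold a, b; rewrite <- (jacobi_identity z Hz).
    replace (_ * _ * _) with ((theta2 z * theta3 z * theta4 z) ^ 4) by ring.
    apply Cpow_nz, theta_prod_neq0, Hz. }
  rewrite E4_jacobi, Delta24_jacobi.
  transitivity (((a + b) ^ (2 * n + 3) - a ^ (2 * n + 3) - b ^ (2 * n + 3)) / (a * b * (a + b))).
  - unfold rho, a, b; replace (8 * (n + 1) + 4)%nat with (4 * (2 * n + 3))%nat by lia.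
    rewrite !Cpow_mult_r, !Cpow_mult_l, (jacobi_identity z Hz).
    unfold Cdiv; do 2 f_equal; ring.
  - rewrite odd_power_sum; field.
    repeat split; intros H0; apply Hab; rewrite H0; ring.
Qed.
End ThetaIdentities.

Theorem theorem2p4 (z : C) (hz : (0 < Im z)%R) (n : nat) (hn : (0 < n)%nat) :
  rho n z =
  sum_n (fun i : nat =>
     RtoC (INR (2 * n + 3) / INR (2 * i + 1) * binomR (n - i) (2 * i)
           * 2 ^ (8 * i))%R
     * Cpow (Delta24 z) i * Cpow (E4 z) (n - 3 * i))
    (Nat.div n 3).
Proof.
  rewrite (rho_binsum z hz), binsum_closed_form; apply sum_n_Cext_loc; intros i Hi.
  pose proof (Nat.div_mod n 3 ltac:(lia)); pose proof (Nat.mod_upper_bound n 3 ltac:(lia)).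
  rewrite binom_binomR by lia.
  rewrite !RtoC_mult, pow_mult, !RtoC_pow, Cpow_mult_l; ring.
Qed.
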